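(* Let $G$ be a graph and $S\subseteq V(G)$. Then $S$ is a minimal zero forcing set of $G$ if and only if $S$ is a maximal ZIr-set of $G$ and $S\cap F\neq\emptyset$ for every fort $F$ of $G$.
   Context: Graphs are simple, finite, undirected, with nonempty vertex set; $N(v)$ is the open neighborhood. Zero forcing: starting from a set of blue vertices, a blue vertex $u$ changes a white vertex $w$ to blue if $w$ is the only white neighbor of $u$; $B$ is a zero forcing set if eventually all vertices are blue; a minimal zero forcing set is one with no proper subset that is a zero forcing set. A nonempty $F\subseteq V(G)$ is a fort if every $v\in V(G)\setminus F$ satisfies $|N(v)\cap F|\ne 1$. For $S\subseteq V(G)$ and $x\in S$, a private fort of $x$ (relative to $S$) is a fort $F$ with $S\cap F=\{x\}$. $S$ is a ZIr-set if every element of $S$ has a private fort relative to $S$; a maximal ZIr-set is a ZIr-set not properly contained in another ZIr-set. *)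

From mathcomp Require Import all_boot.
Set Implicit Arguments. Unset Strict Implicit. Unset Printing Implicit Defensive.

Section Graph.
Variable T : finType.
Variable e : rel T.

Definition simple_graph : Prop := symmetric e /\ irreflexive e.

Definition nbhd (v : T) : {set T} := [set w | e v w].

(* [forces_reach B C]: starting with blue set B, the blue set C can be obtained
   by a finite sequence of zero forcing steps: a blue u whose unique white
   neighbour is w turns w blue. *)
Inductive forces_reach (B : {set T}) : {set T} -> Prop :=
| fr_refl : forces_reach B B
| fr_step (C : {set T}) (u w : T) :
    forces_reach B C -> u \in C -> w \notin C ->
    nbhd u :\: C = [set w] -> forces_reach B (w |: C).

Definition zero_forcing_set (B : {set T}) : Prop := forces_reach B [set: T].

Definition minimal_zero_forcing_set (B : {set T}) : Prop :=
  zero_forcing_set B /\ forall B' : {set T}, B' \proper B -> ~ zero_forcing_set B'.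

Definition fort (F : {set T}) : Prop :=
  F != set0 /\ forall v, v \notin F -> #|nbhd v :&: F| != 1.

Definition private_fort (S : {set T}) (x : T) (F : {set T}) : Prop :=
  fort F /\ S :&: F = [set x].

Definition ZIr_set (S : {set T}) : Prop :=
  forall x, x \in S -> exists F, private_fort S x F.

Definition maximal_ZIr_set (S : {set T}) : Prop :=
  ZIr_set S /\ forall S' : {set T}, S \proper S' -> ~ ZIr_set S'.

End Graph.

(* Forcing can never enter a fort disjoint from the blue set: a blue vertex
   outside the fort has either no white neighbour in it or at least two.
   Conversely, when forcing stalls the white vertices form a fort.  Hence the
   zero forcing sets are exactly the sets meeting every fort, and x has a
   private fort relative to such a set S exactly when S minus x is no longer
   zero forcing.  Finally, a private fort of y relative to a ZIr-superset of S
   meets S only in y, so S contains every ZIr-set containing it. *)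
From mathcomp Require Import all_boot.
From Stdlib Require Classical_Prop Classical_Pred_Type.
Set Implicit Arguments. Unset Strict Implicit. Unset Printing Implicit Defensive.

Section ZeroForcing.
Variable T : finType.
Variable e : rel T.

Lemma forces_reach_subset B C : forces_reach e B C -> B \subset C.
Proof.
elim=> [|D u w _ sBD _ _ _]; first exact: subxx.
exact: subset_trans sBD (subsetU1 w D).
Qed.

Lemma forces_reach_fort_disjoint B C F :
  forces_reach e B C -> fort e F -> B :&: F = set0 -> C :&: F = set0.
Proof.
move=> reachBC [_ fortF] BF0; elim: reachBC => // D u w _ DF0 uD _ uw.
have notDF x : x \in F -> x \notin D.
  move=> xF; apply: contraT; rewrite negbK => xD.
  by rewrite -(in_set0 x) -DF0 inE xD.
apply/setP=> x; rewrite setIUl DF0 setU0 !inE; apply/andP=> [[/eqP -> wF]].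
have uF : u \notin F by apply: contraL uD; apply: notDF.
have /negP := fortF u uF; apply; apply/cards1P; exists w; apply/setP=> y.
apply/setIP/set1P=> [[yN yF]|->].
  by apply/set1P; rewrite -uw; apply/setDP; split; last exact: notDF.
by have /setDP[wN _] : w \in nbhd e u :\: D by rewrite uw set11.
Qed.

Lemma fort_setC_stalled C :
  C != [set: T] -> (forall v, v \in C -> #|nbhd e v :&: ~: C| != 1) ->
  fort e (~: C).
Proof.
move=> CT stalled; split=> [|v]; last by rewrite inE negbK; apply: stalled.
by apply: contraNneq CT => C0; rewrite -(setCK C) C0 setC0.
Qed.

Lemma forces_reach_stall B :
  exists2 C, forces_reach e B C & C = [set: T] \/ fort e (~: C).
Proof.
suff reach n C : #|~: C| <= n -> forces_reach e B C ->
    exists2 D, forces_reach e B D & D = [set: T] \/ fort e (~: D).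
  exact: (reach _ B (leqnn _) (fr_refl _ _)).
elim: n C => [|n IHn] C Cn reachBC.
  have /eqP C0 : ~: C == set0 by rewrite -cards_eq0 -leqn0.
  by exists C => //; left; rewrite -(setCK C) C0 setC0.
have [CT|CT] := eqVneq C [set: T]; first by exists C; [|left].
have [/existsP[v /andP[vC /cards1P[w vw]]]|stalled] :=
  boolP [exists v, (v \in C) && (#|nbhd e v :&: ~: C| == 1)]; last first.
  exists C => //; right; apply: fort_setC_stalled CT _ => v vC.
  by apply: contraNneq stalled => vC1; apply/existsP; exists v; rewrite vC vC1.
have /setIP[_] : w \in nbhd e v :&: ~: C by rewrite vw set11.
rewrite inE => wC; apply: (IHn (w |: C)); last first.
  by apply: fr_step reachBC vC wC _; rewrite setDE.
rewrite -ltnS; apply: leq_trans Cn; apply: proper_card; rewrite setCU.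
by apply/properP; split; [exact: subsetIr|exists w; rewrite !inE ?eqxx].
Qed.

Lemma zero_forcing_setP B :
  zero_forcing_set e B <-> forall F, fort e F -> B :&: F != set0.
Proof.
split=> [zfB F fortF|meetB].
  apply/eqP=> BF0; have := forces_reach_fort_disjoint zfB fortF BF0.
  by rewrite setTI => F0; case: fortF; rewrite F0 eqxx.
have [C reachBC [CT|fortC]] := forces_reach_stall B.
  by rewrite /zero_forcing_set -CT.
have /negP[] := meetB _ fortC; apply/eqP/setP=> x; rewrite !inE.
by apply/andP=> [[/(subsetP (forces_reach_subset reachBC)) ->]].
Qed.

Lemma private_fort_of_not_zero_forcing (S : {set T}) x :
  (forall F, fort e F -> S :&: F != set0) -> ~ zero_forcing_set e (S :\ x) ->
  exists F, private_fort e S x F.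
Proof.
move=> meetS /zero_forcing_setP /Classical_Pred_Type.not_all_ex_not[F notSxF].
have [fortF SxF] := Classical_Prop.imply_to_and _ _ notSxF.
have SxF0 y : y \in F -> y \in S -> y = x.
  move=> yF yS; apply/eqP; apply: contraT => yx; case: SxF.
  by apply/set0Pn; exists y; rewrite !inE yx yS yF.
exists F; split=> //; apply/setP=> y; rewrite inE.
apply/setIP/eqP=> [[yS yF]|->]; first exact: SxF0.
have /set0Pn[z /setIP[zS zF]] := meetS F fortF.
by rewrite -(SxF0 z zF zS).
Qed.

Lemma ZIr_set_subset (S S' : {set T}) :
  (forall F, fort e F -> S :&: F != set0) -> S \subset S' -> ZIr_set e S' ->
  S' \subset S.
Proof.
move=> meetS sSS' ZIrS'; apply/subsetP=> y yS'.
have [F [fortF S'F]] := ZIrS' y yS'.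
have /set0Pn[z /setIP[zS zF]] := meetS F fortF.
have : z \in S' :&: F by rewrite inE (subsetP sSS') ?zF.
by rewrite S'F => /set1P <-.
Qed.

End ZeroForcing.

Theorem proposition2p2 (T : finType) (e : rel T) (S : {set T}) :
  simple_graph e -> 0 < #|T| ->
  (minimal_zero_forcing_set e S <->
   (maximal_ZIr_set e S /\ forall F : {set T}, fort e F -> S :&: F != set0)).
Proof.
move=> _ _; split=> [[/zero_forcing_setP meetS minS]|[[ZIrS _] meetS]].
  split=> //; split=> [x xS|S' /properP[sSS' [y yS' yS]] ZIrS'].
    apply: private_fort_of_not_zero_forcing meetS _; apply: minS.
    by apply/properP; split; [exact: subD1set|exists x; rewrite ?setD11].
  by move: yS; rewrite (subsetP (ZIr_set_subset meetS sSS' ZIrS')).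
split=> [|B /properP[sBS [x xS xB]] /zero_forcing_setP meetB].
  exact/zero_forcing_setP.
by move: xB; rewrite (subsetP (ZIr_set_subset meetB sBS ZIrS)).
Qed.
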